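(* A function $f\colon\prod_{i\in[n]}X_i\to Y$ is a pseudo-polynomial function if and only if it satisfies condition (BC) and $\Phi_k^-\le\Phi_k^+$ (pointwise) for all $k\in[n]$.
   Context: $Y$ is a finite distributive lattice identified with a sublattice of $\mathcal{P}(U)$ for a finite set $U$, with least element $0=\emptyset$, greatest element $1=U$, and $\wedge,\vee$ being intersection and union; $\overline{S}=U\setminus S$. For $S\subseteq U$, $\operatorname{cl}(S)=\bigwedge\{y\in Y: y\ge S\}$, $\operatorname{int}(S)=\bigvee\{y\in Y: y\le S\}$. $[n]=\{1,\ldots,n\}$; $X_1,\ldots,X_n$ are arbitrary sets with at least two elements, each with two fixed distinct elements $0_{X_k},1_{X_k}$ (written $0,1$). For $\mathbf{x}\in\prod_i X_i$ and $a\in X_k$, $\mathbf{x}_k^a$ is $\mathbf{x}$ with $k$-th component replaced by $a$. A map $\varphi_k\colon X_k\to Y$ satisfies the boundary condition if $\varphi_k(0_{X_k})\le\varphi_k(x_k)\le\varphi_k(1_{X_k})$ for all $x_k$. A polynomial function $Y^n\to Y$ is a composition of $\wedge,\vee$ with variables and constants. $f$ is a pseudo-polynomial function if $f(\mathbf{x})=p(\varphi_1(x_1),\ldots,\varphi_n(x_n))$ for some polynomial function $p$ and maps $\varphi_k$ satisfying the boundary condition. Condition (BC): $f(\mathbf{x}_k^0)\le f(\mathbf{x})\le f(\mathbf{x}_k^1)$ for all $k\in[n]$ and all $\mathbf{x}$. For $k\in[n]$, $a_k\in X_k$: $$\Phi_k^-(a_k)=\bigvee_{\mathbf{x}:\,x_k=a_k}\operatorname{cl}\big(f(\mathbf{x})\wedge\overline{f(\mathbf{x}_k^0)}\big),\qquad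 \Phi_k^+(a_k)=\bigwedge_{\mathbf{x}:\,x_k=a_k}\operatorname{int}\big(f(\mathbf{x})\vee\overline{f(\mathbf{x}_k^1)}\big),$$ ranging over all $\mathbf{x}$ with $k$-th component $a_k$. *)

From Stdlib Require Import Classical ClassicalEpsilon.
From mathcomp Require Import all_boot.
Set Implicit Arguments. Unset Strict Implicit. Unset Printing Implicit Defensive.

Lemma pbool_ex (P : Prop) : exists b : bool, if b then P else ~ P.
Proof. by case: (classic P) => H; [exists true | exists false]. Qed.
Definition pbool (P : Prop) : bool := proj1_sig (constructive_indefinite_description _ (pbool_ex P)).

Section Defs.
Variable U : finType.
Variable Y : {set {set U}}.

Definition cl (S : {set U}) : {set U} := \bigcap_(y in Y | S \subset y) y.
Definition int (S : {set U}) : {set U} := \bigcup_(y in Y | y \subset S) y.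

Variable n : nat.
Variable X : 'I_n -> Type.

(* x_k^a : x with k-th component replaced by a *)
Definition upd (x : forall i, X i) (k : 'I_n) (a : X k) : forall i, X i :=
  fun i => match k =P i with
           | ReflectT e => eq_rect k X a i e
           | ReflectF _ => x i
           end.

Inductive lterm : Type :=
| LVar of 'I_n
| LCst of {set U}
| LMeet of lterm & lterm
| LJoin of lterm & lterm.

Fixpoint leval (e : 'I_n -> {set U}) (t : lterm) : {set U} :=
  match t with
  | LVar i => e i
  | LCst c => c
  | LMeet t1 t2 => leval e t1 :&: leval e t2
  | LJoin t1 t2 => leval e t1 :|: leval e t2
  end.

Fixpoint consts_in (t : lterm) : Prop :=
  match t with
  | LVar _ => True
  | LCst c => c \in Y
  | LMeet t1 t2 | LJoin t1 t2 => consts_in t1 /\ consts_in t2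
  end.

Variables (zero one : forall k, X k).

Definition boundary_cond k (phi : X k -> {set U}) : Prop :=
  forall a : X k, phi (zero k) \subset phi a /\ phi a \subset phi (one k).

Definition pseudo_polynomial (f : (forall i, X i) -> {set U}) : Prop :=
  exists (t : lterm) (phi : forall k, X k -> {set U}),
    consts_in t /\
    (forall k a, phi k a \in Y) /\
    (forall k, boundary_cond (phi k)) /\
    (forall x, f x = leval (fun k => phi k (x k)) t).

Definition BC (f : (forall i, X i) -> {set U}) : Prop :=
  forall k x, f (upd x (zero k)) \subset f x /\ f x \subset f (upd x (one k)).

(* Phi_k^- (a) : join (in Y, i.e. union) of cl(f x /\ ~ f x_k^0) over x with x_k = a *)
Definition PhiM (f : (forall i, X i) -> {set U}) (k : 'I_n) (a : X k) : {set U} :=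
  [set u | pbool (exists x : forall i, X i,
                    x k = a /\ u \in cl (f x :&: ~: f (upd x (zero k))))].

(* Phi_k^+ (a) : meet (in Y, i.e. intersection) of int(f x \/ ~ f x_k^1) over x with x_k = a *)
Definition PhiP (f : (forall i, X i) -> {set U}) (k : 'I_n) (a : X k) : {set U} :=
  [set u | pbool (forall x : forall i, X i,
                    x k = a -> u \in int (f x :|: ~: f (upd x (one k))))].
End Defs.

From mathcomp Require Import all_boot.
From Stdlib Require Import FunctionalExtensionality ClassicalEpsilon.
Set Implicit Arguments. Unset Strict Implicit. Unset Printing Implicit Defensive.

(* The pivots of both directions are the two "bracket" inclusions, for a family
   of maps phi_k : X_k -> Y,
     (lower)  f(x) /\ ~f(x_k^0)  <=  phi_k(x_k),
     (upper)  phi_k(x_k)  <=  f(x) \/ ~f(x_k^1).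
   - Necessity.  A lattice polynomial is monotone, and whether u belongs to its
     value depends only on which variables contain u.  Hence for f = p o phi
     with phi satisfying the boundary condition we get (BC) and both brackets;
     taking closures resp. interiors gives Phi_k^- <= phi_k <= Phi_k^+.
   - Sufficiency.  Given (BC) and Phi_k^- <= Phi_k^+, the map phi_k := Phi_k^-
     (changed to 0 at 0_{X_k} and to 1 at 1_{X_k}) satisfies the brackets and
     the boundary condition.  For any phi with the brackets and (BC), moving
     the coordinates of x one at a time to the corner c_u with c_u(i) = 1 iff
     u in phi_i(x_i) shows u in f(x) <-> u in f(c_u), which yields the normal
     form  f(x) = \/_c ( f(c) /\ /\_{i : c(i) = 1} phi_i(x_i) ). *)

Lemma pboolP (P : Prop) : reflect P (pbool P).
Proof.
rewrite /pbool; case: constructive_indefinite_description => [[] H] /=; by constructor.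
Qed.

Section Update.
Variables (n : nat) (X : 'I_n -> Type).

Lemma upd_same (x : forall i, X i) k (a : X k) : upd x a k = a.
Proof.
rewrite /upd; case: (k =P k) => [e|ne] //.
by rewrite (eq_irrelevance e (erefl k)).
Qed.

Lemma upd_other (x : forall i, X i) k (a : X k) i : k != i -> upd x a i = x i.
Proof. by rewrite /upd; case: (k =P i) => // ->; rewrite eqxx. Qed.

Lemma upd_off (x : forall i, X i) k (a : X k) i : i != k -> upd x a i = x i.
Proof. by move=> ne; rewrite upd_other // eq_sym. Qed.

Lemma upd_id (x : forall i, X i) k : upd x (x k) = x.
Proof.
apply: functional_extensionality_dep => i.
by case: (eqVneq k i) => [<-|ne]; [exact: upd_same | exact: upd_other].
Qed.
End Update.

Section Terms.
Variables (U : finType) (n : nat).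

Lemma leval_mono_at (e e' : 'I_n -> {set U}) t u :
  (forall i, u \in e i -> u \in e' i) -> u \in leval e t -> u \in leval e' t.
Proof.
move=> He; elim: t => [i|c|t1 IH1 t2 IH2|t1 IH1 t2 IH2] //=; rewrite ?inE.
- exact: He.
- by case/andP => /IH1 -> /IH2 ->.
- by case/orP => [/IH1 ->|/IH2 ->]; rewrite ?orbT.
Qed.

Definition joinT (l : seq (lterm U n)) := foldr (@LJoin U n) (LCst n set0) l.
Definition meetT (l : seq (lterm U n)) := foldr (@LMeet U n) (LCst n setT) l.

Lemma leval_join (T : Type) (F : T -> lterm U n) r e u :
  (u \in leval e (joinT (map F r))) = has (fun s => u \in leval e (F s)) r.
Proof. by elim: r => [|s r IH] /=; rewrite ?inE // IH. Qed.

Lemma leval_meet (T : Type) (F : T -> lterm U n) r e u :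
  (u \in leval e (meetT (map F r))) = all (fun s => u \in leval e (F s)) r.
Proof. by elim: r => [|s r IH] /=; rewrite ?inE // IH. Qed.

Lemma consts_join (Y : {set {set U}}) (T : Type) (F : T -> lterm U n) r :
  set0 \in Y -> (forall s, consts_in Y (F s)) -> consts_in Y (joinT (map F r)).
Proof. by move=> HY0 HF; elim: r => [|s r IH] /=. Qed.

Lemma consts_meet (Y : {set {set U}}) (T : Type) (F : T -> lterm U n) r :
  setT \in Y -> (forall s, consts_in Y (F s)) -> consts_in Y (meetT (map F r)).
Proof. by move=> HY1 HF; elim: r => [|s r IH] /=. Qed.
End Terms.

Section ClosureInterior.
Variables (U : finType) (Y : {set {set U}}).
Hypotheses (HY0 : set0 \in Y) (HY1 : setT \in Y)
  (HYI : forall y z, y \in Y -> z \in Y -> y :&: z \in Y)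
  (HYU : forall y z, y \in Y -> z \in Y -> y :|: z \in Y).

Lemma cl_in (S : {set U}) : cl Y S \in Y.
Proof.
by apply: (big_ind (fun s => s \in Y)) => [|y z|y /andP[]] //; exact: HYI.
Qed.

Lemma cl_sup (S : {set U}) : S \subset cl Y S.
Proof. by apply/bigcapsP => y /andP[]. Qed.

Lemma cl_min (S y : {set U}) : y \in Y -> S \subset y -> cl Y S \subset y.
Proof. by move=> yY Sy; apply: bigcap_inf; rewrite yY. Qed.

Lemma int_sub (S : {set U}) : int Y S \subset S.
Proof. by apply/bigcupsP => y /andP[]. Qed.

Lemma int_max (S y : {set U}) : y \in Y -> y \subset S -> y \subset int Y S.
Proof. by move=> yY Sy; apply: bigcup_sup; rewrite yY. Qed.

(* Phi_k^-(a) is a join of closures, hence an element of Y. *)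
Lemma PhiM_in n (X : 'I_n -> Type) (zero : forall k, X k) f k (a : X k) :
  PhiM Y zero f a \in Y.
Proof.
have -> : PhiM Y zero f a = \bigcup_(y | pbool (exists x : forall i, X i,
     x k = a /\ y = cl Y (f x :&: ~: f (upd x (zero k))))) y.
  apply/setP => u; rewrite inE; apply/pboolP/bigcupP.
  - case=> x [xa ucl]; exists (cl Y (f x :&: ~: f (upd x (zero k)))) => //.
    by apply/pboolP; exists x.
  - by case=> y /pboolP [x [xa ->]] uy; exists x.
apply: (big_ind (fun s => s \in Y)) => [|y z|y /pboolP [x [_ ->]]] //.
- exact: HYU.
- exact: cl_in.
Qed.
End ClosureInterior.

Section Brackets.
Variables (U : finType) (Y : {set {set U}}) (n : nat) (X : 'I_n -> Type).
Variables (zero one : forall k, X k) (f : (forall i, X i) -> {set U}).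
Variable phi : forall k, X k -> {set U}.
Arguments phi : clear implicits.

Definition lower_bracket : Prop :=
  forall x k, f x :&: ~: f (upd x (zero k)) \subset phi k (x k).
Definition upper_bracket : Prop :=
  forall x k, phi k (x k) \subset f x :|: ~: f (upd x (one k)).

Lemma PhiM_sub_phi k (a : X k) :
  lower_bracket -> phi k a \in Y -> PhiM Y zero f a \subset phi k a.
Proof.
move=> Hlow phiY; apply/subsetP => u; rewrite inE => /pboolP [x [xa ucl]].
rewrite -xa in phiY *; exact: (subsetP (cl_min phiY (Hlow x k))).
Qed.

Lemma phi_sub_PhiP k (a : X k) :
  upper_bracket -> phi k a \in Y -> phi k a \subset PhiP Y one f a.
Proof.
move=> Hup phiY; apply/subsetP => u ua; rewrite inE; apply/pboolP => x xa.
by apply: (subsetP (int_max phiY _)) => //; rewrite -xa; exact: Hup.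
Qed.
End Brackets.

Section Necessity.
Variables (U : finType) (n : nat) (X : 'I_n -> Type) (zero one : forall k, X k).
Variables (t : lterm U n) (phi : forall k, X k -> {set U}).
Arguments phi : clear implicits.
Variable f : (forall i, X i) -> {set U}.
Hypothesis Hft : forall x, f x = leval (fun k => phi k (x k)) t.

Lemma mem_poly_coord (x x' : forall i, X i) k u :
  (forall i, i != k -> x i = x' i) ->
  (u \in phi k (x k) -> u \in phi k (x' k)) -> u \in f x -> u \in f x'.
Proof.
move=> Hoff Hk; rewrite !Hft; apply: leval_mono_at => i.
by case: (eqVneq i k) => [->|ne]; [exact: Hk | rewrite Hoff].
Qed.

Lemma polynomial_lower : lower_bracket zero f phi.
Proof.
move=> x k; apply/subsetP => u; rewrite !inE => /andP[ux].
apply: contraNT => uphi; apply: (mem_poly_coord (k := k) _ _ ux) => [i ne|hk].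
- by rewrite upd_off.
- by rewrite hk in uphi.
Qed.

Lemma polynomial_upper : upper_bracket one f phi.
Proof.
move=> x k; apply/subsetP => u uphi; rewrite !inE.
case: (boolP (u \in f x)) => //= ux; apply: contra ux.
by apply: (mem_poly_coord (k := k)) => [i ne|_]; rewrite ?upd_off ?upd_same.
Qed.

Hypothesis Hbd : forall k, boundary_cond zero one (phi k).

Lemma polynomial_BC : BC zero one f.
Proof.
move=> k x; have [H0 H1] := Hbd (x k).
by split; apply/subsetP => u; apply: (mem_poly_coord (k := k)) => [i ne|];
  rewrite ?(upd_off _ _ ne) ?upd_same //; apply/subsetP.
Qed.
End Necessity.

Section Reconstruction.
Variables (U : finType) (n : nat) (X : 'I_n -> Type) (zero one : forall k, X k).
Variables (f : (forall i, X i) -> {set U}) (phi : forall k, X k -> {set U}).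
Arguments phi : clear implicits.
Hypothesis Hlow : lower_bracket zero f phi.
Hypothesis Hup : upper_bracket one f phi.
Hypothesis HBC : BC zero one f.

Definition extreme k (b : bool) : X k := if b then one k else zero k.

(* Moving coordinate k to an extreme value: towards 1 never loses u, towards 0
   loses u only when u lies in phi_k(y_k). *)
Lemma mem_from_extreme y k (b : bool) u : (b -> u \in phi k (y k)) ->
  u \in f (upd y (extreme k b)) -> u \in f y.
Proof.
case: b => /= [/(_ isT) hp h1|_ h0].
- by move: (subsetP (Hup y k) u hp); rewrite !inE h1 orbF.
- exact: (subsetP (HBC k y).1).
Qed.

Lemma mem_to_extreme y k (b : bool) u : (u \in phi k (y k) -> b) ->
  u \in f y -> u \in f (upd y (extreme k b)).
Proof.
case: b => /= [_ h|hp h]; first exact: (subsetP (HBC k y).2).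
case: (boolP (u \in f (upd y (zero k)))) => // h0.
by apply: hp; apply: (subsetP (Hlow y k)); rewrite !inE h h0.
Qed.

Definition corner (c : 'I_n -> bool) : forall i, X i := fun i => extreme i (c i).
Definition fill (c : 'I_n -> bool) (m : nat) (x : forall i, X i) : forall i, X i :=
  fun i => if (i < m)%N then corner c i else x i.

Lemma fill0 c x : fill c 0 x = x.
Proof. by apply: functional_extensionality_dep => i; rewrite /fill ltn0. Qed.

Lemma fill_all c x : fill c n x = corner c.
Proof. by apply: functional_extensionality_dep => i; rewrite /fill ltn_ord. Qed.

Lemma fillS c m x (H : (m < n)%N) :
  fill c m.+1 x = upd (fill c m x) (corner c (Ordinal H)).
Proof.
apply: functional_extensionality_dep => i.
case: (eqVneq (Ordinal H) i) => [<-|ne]; first by rewrite upd_same /fill /= ltnSn.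
rewrite upd_other // /fill ltnS leq_eqVlt; case: eqP => [e|_] //=.
by case/negP: ne; apply/eqP/val_inj; rewrite /= e.
Qed.

Lemma fill_at c m x (H : (m < n)%N) : fill c m x (Ordinal H) = x (Ordinal H).
Proof. by rewrite /fill /= ltnn. Qed.

Lemma mem_from_corner (c : 'I_n -> bool) x u m : (m <= n)%N ->
  (forall i, c i -> u \in phi i (x i)) -> u \in f (fill c m x) -> u \in f x.
Proof.
move=> + hc; elim: m => [|m IH] Hm; first by rewrite fill0.
rewrite (fillS c x Hm) => /mem_from_extreme h; apply: IH; first exact: ltnW.
by apply: h; rewrite fill_at; apply: hc.
Qed.

Lemma mem_to_corner (c : 'I_n -> bool) x u m : (m <= n)%N ->
  (forall i, u \in phi i (x i) -> c i) -> u \in f x -> u \in f (fill c m x).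
Proof.
move=> + hc; elim: m => [|m IH] Hm; first by rewrite fill0.
move=> ux; rewrite (fillS c x Hm); apply: mem_to_extreme.
- by rewrite fill_at; apply: hc.
- by apply: IH => //; exact: ltnW.
Qed.

Definition normal_form : lterm U n :=
  joinT [seq LMeet (LCst n (f (corner s)))
           (meetT [seq LVar U i | i <- [seq i <- enum 'I_n | s i]])
        | s : {ffun 'I_n -> bool} <- enum {ffun 'I_n -> bool}].

Lemma normal_formE x : f x = leval (fun k => phi k (x k)) normal_form.
Proof.
apply/setP => u; rewrite /normal_form leval_join; apply/idP/idP.
- move=> ux; pose b := [ffun i => u \in phi i (x i)].
  have ub : u \in f (corner b).
    by rewrite -(fill_all b x); apply: mem_to_corner => // i; rewrite ffunE.
  apply/hasP; exists b; first by rewrite mem_enum.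
  rewrite /= inE ub leval_meet /=; apply/allP => i.
  by rewrite mem_filter ffunE => /andP[].
- case/hasP => s _; rewrite /= inE leval_meet => /andP[us /allP ua].
  apply: (mem_from_corner (c := s) (leqnn n)); last by rewrite fill_all.
  by move=> i si; apply: (ua i); rewrite mem_filter si mem_enum.
Qed.
End Reconstruction.

Lemma normal_form_consts (U : finType) (Y : {set {set U}}) n (X : 'I_n -> Type)
  (zero one : forall k, X k) (f : (forall i, X i) -> {set U}) :
  set0 \in Y -> setT \in Y -> (forall x, f x \in Y) ->
  consts_in Y (normal_form zero one f).
Proof.
move=> HY0 HY1 Hf; apply: consts_join => // s /=.
by split; [exact: Hf | exact: consts_meet].
Qed.

Section Witness.
Variables (U : finType) (Y : {set {set U}}) (n : nat) (X : 'I_n -> Type).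
Variables (zero one : forall k, X k) (f : (forall i, X i) -> {set U}).

Definition phi_hat k (a : X k) : {set U} :=
  if pbool (a = zero k) then set0
  else if pbool (a = one k) then setT else PhiM Y zero f a.

Lemma phi_hat_in k (a : X k) :
  set0 \in Y -> setT \in Y ->
  (forall y z, y \in Y -> z \in Y -> y :&: z \in Y) ->
  (forall y z, y \in Y -> z \in Y -> y :|: z \in Y) -> phi_hat a \in Y.
Proof.
move=> HY0 HY1 HYI HYU; rewrite /phi_hat.
by case: pboolP => _ //; case: pboolP => _ //; exact: PhiM_in.
Qed.

Lemma phi_hat_boundary k : zero k <> one k -> boundary_cond zero one (@phi_hat k).
Proof.
move=> Hzo a; have -> : phi_hat (zero k) = set0 by rewrite /phi_hat; case: pboolP.
have -> : phi_hat (one k) = setT.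
  by rewrite /phi_hat; case: pboolP => [e|_]; [case: Hzo | case: pboolP].
by rewrite sub0set subsetT.
Qed.

Lemma phi_hat_lower : lower_bracket zero f phi_hat.
Proof.
move=> x k; rewrite /phi_hat; case: pboolP => [e0|_].
  by rewrite -e0 upd_id setICr sub0set.
case: pboolP => [_|_]; first exact: subsetT.
apply: subset_trans (cl_sup Y _) _; apply/subsetP => u ucl; rewrite inE.
by apply/pboolP; exists x.
Qed.

Lemma phi_hat_upper :
  (forall k (a : X k), PhiM Y zero f a \subset PhiP Y one f a) ->
  upper_bracket one f phi_hat.
Proof.
move=> HPhi x k; rewrite /phi_hat; case: pboolP => [_|_]; first exact: sub0set.
case: pboolP => [e1|_]; first by rewrite -e1 upd_id setUCr.
apply: subset_trans (HPhi k (x k)) _; apply/subsetP => u; rewrite inE.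
by move/pboolP/(_ x erefl); apply/subsetP; exact: int_sub.
Qed.
End Witness.

Theorem mainTheorem6 (U : finType) (Y : {set {set U}})
  (HY0 : set0 \in Y) (HY1 : setT \in Y)
  (HYI : forall y z, y \in Y -> z \in Y -> y :&: z \in Y)
  (HYU : forall y z, y \in Y -> z \in Y -> y :|: z \in Y)
  (n : nat) (X : 'I_n -> Type) (zero one : forall k, X k)
  (Hzo : forall k, zero k <> one k)
  (f : (forall i, X i) -> {set U}) (Hf : forall x, f x \in Y) :
  pseudo_polynomial Y zero one f <->
  (BC zero one f /\
   forall (k : 'I_n) (a : X k), PhiM Y zero f a \subset PhiP Y one f a).
Proof.
split.
- case=> t [phi [_ [HphiY [Hbd Hft]]]]; split; first exact: polynomial_BC Hft Hbd.
  move=> k a; apply: (subset_trans (B := phi k a)).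
  + exact: PhiM_sub_phi (polynomial_lower zero Hft) (HphiY k a).
  + exact: phi_sub_PhiP (polynomial_upper one Hft) (HphiY k a).
- case=> HBC HPhi; exists (normal_form zero one f), (phi_hat Y zero one f).
  split; [exact: normal_form_consts | split; [|split]].
  + by move=> k a; exact: phi_hat_in.
  + by move=> k; exact: phi_hat_boundary.
  + apply: normal_formE HBC; [exact: phi_hat_lower | exact: phi_hat_upper].
Qed.
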